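(* Let $\mathbb{k}$ be a commutative ring, $M$ a $\mathbb{k}$-module with a descending filtration by $\mathbb{k}$-submodules $M=M_0\supseteq M_1\supseteq\cdots$, $G^{(1)}\subseteq GL^{(1)}_{\mathbb{k}}(M)$ a subgroup and $T\subseteq \mathrm{End}^{(1)}_{\mathbb{k}}(M)$ a $\mathbb{k}$-submodule such that the pair $(T,G^{(1)})$ is of pointwise weak Lie type, i.e. for every $i\ge1$: (a) for every $\xi\in T^{(i)}$ and $z\in M$ there exists $g\in G^{(i)}$ such that, if $\mathrm{ord}(\xi(z))<\infty$, then $\mathrm{ord}((g-\mathrm{Id}-\xi)(z))\ge 2\,\mathrm{ord}(\xi)+\mathrm{ord}(z)$; (b) for every $g\in G^{(i)}$ and $z\in M$ there exists $\xi\in T^{(i)}$ such that, if $\mathrm{ord}((g-\mathrm{Id})(z))<\infty$, then $\mathrm{ord}((g-\mathrm{Id}-\xi)(z))\ge 2\,\mathrm{ord}(g-\mathrm{Id})+\mathrm{ord}(z)$. Let $z\in M$ and $N\ge 0$ an integer. Then: 1. If $\overline{T^{(k)}(z)}\supseteq M_{N+k+\mathrm{ord}(z)}$ for every $k\ge1$, then $\overline{G^{(k)}z}\supseteq\{z\}+M_{N+k+\mathrm{ord}(z)}$ for every $k>N$. 2. If $\overline{G^{(k)}z}\supseteq\{z\}+M_{N+k+\mathrm{ord}(z)}$ for every $k\ge1$, then $\overline{T^{(k)}(z)}\supseteq M_{N+k+\mathrm{ord}(z)}$ for every $k>N$.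
   Context: For $z\in M$, $\mathrm{ord}(z)=\sup\{j: z\in M_j\}$. For $i\ge0$, $\mathrm{End}^{(i)}_{\mathbb{k}}(M)=\{\phi\in \mathrm{End}_{\mathbb{k}}(M): \phi(M_j)\subseteq M_{j+i}\ \forall j\ge 0\}$, and for $\phi\in\mathrm{End}_{\mathbb{k}}(M)$, $\mathrm{ord}(\phi)=\sup\{j:\phi\in\mathrm{End}^{(j)}_{\mathbb{k}}(M)\}$. $GL^{(0)}_{\mathbb{k}}(M)$ is the group of $\mathbb{k}$-linear automorphisms $g$ with $g(M_j)\subseteq M_j$, $g^{-1}(M_j)\subseteq M_j$ for all $j$; for $i\ge1$, $GL^{(i)}_{\mathbb{k}}(M)=\{g\in GL^{(0)}_{\mathbb{k}}(M): g-\mathrm{Id},g^{-1}-\mathrm{Id}\in\mathrm{End}^{(i)}_{\mathbb{k}}(M)\}$. $G^{(i)}=G^{(1)}\cap GL^{(i)}_{\mathbb{k}}(M)$, $T^{(i)}=T\cap\mathrm{End}^{(i)}_{\mathbb{k}}(M)$, $T^{(k)}(z)=\{\xi(z):\xi\in T^{(k)}\}$, $G^{(k)}z$ is the orbit of $z$. For $X\subseteq M$, $\overline{X}=\bigcap_{j\ge1}(X+M_j)$. *)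

From mathcomp Require Import all_boot all_algebra.
From Stdlib Require Import ClassicalEpsilon.
Set Implicit Arguments. Unset Strict Implicit. Unset Printing Implicit Defensive.
Import GRing.Theory.
Local Open Scope ring_scope.

(* Extended naturals N ∪ {∞}: [None] is ∞. *)
Definition enat := option nat.

Definition eadd (a b : enat) : enat :=
  match a, b with Some m, Some n => Some (m + n)%N | _, _ => None end.

Definition ele (a b : enat) : Prop :=
  match a, b with
  | _, None => True
  | None, Some _ => False
  | Some m, Some n => (m <= n)%N
  end.

Definition efin (a : enat) : Prop := a <> None.

Definition is_esup (S : nat -> Prop) (o : enat) : Prop :=
  match o with
  | Some n => S n /\ (forall j, S j -> (j <= n)%N)
  | None => forall j, exists2 j', (j <= j')%N & S j'
  end.

Definition esup (S : nat -> Prop) : enat :=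
  epsilon (inhabits None) (is_esup S).

Section Filtered.
Variables (R : comPzRingType) (M : lmodType R) (Mf : nat -> M -> Prop).

(* Mf n is the n-th filtration step M_n; M_∞ := ⋂_j M_j *)
Definition Mfe (o : enat) (w : M) : Prop :=
  match o with Some n => Mf n w | None => forall j, Mf j w end.

Definition ordz (z : M) : enat := esup (fun j => Mf j z).

Definition End_i (i : nat) (phi : M -> M) : Prop :=
  linear phi /\ forall j w, Mf j w -> Mf (j + i) (phi w).

Definition ordE (phi : M -> M) : enat := esup (fun j => End_i j phi).

Definition Id : M -> M := id.
Definition fsub (f g : M -> M) : M -> M := fun w => f w - g w.

Definition GL0_inv (g h : M -> M) : Prop :=
  [/\ linear g, cancel g h, cancel h g,
      (forall j w, Mf j w -> Mf j (g w)) & (forall j w, Mf j w -> Mf j (h w))].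

Definition GL0 (g : M -> M) : Prop := exists h, GL0_inv g h.

Definition GLi (i : nat) (g : M -> M) : Prop :=
  exists h, GL0_inv g h /\ End_i i (fsub g Id) /\ End_i i (fsub h Id).

Definition is_subgroup_GL1 (G : (M -> M) -> Prop) : Prop :=
  [/\ (forall g, G g -> GLi 1 g), G Id,
      (forall g h, G g -> G h -> G (g \o h)) &
      (forall g, G g -> exists2 h, G h & cancel g h /\ cancel h g)].

Definition is_submodule_End1 (T : (M -> M) -> Prop) : Prop :=
  [/\ (forall xi, T xi -> End_i 1 xi), T (fun _ => 0) &
      (forall (a : R) xi eta, T xi -> T eta -> T (fun w => a *: xi w + eta w))].

Definition Gi (G : (M -> M) -> Prop) (i : nat) (g : M -> M) : Prop := G g /\ GLi i g.
Definition Ti (T : (M -> M) -> Prop) (i : nat) (xi : M -> M) : Prop := T xi /\ End_i i xi.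

Definition pointwise_weak_Lie (T G : (M -> M) -> Prop) : Prop :=
  forall i, (1 <= i)%N ->
  (forall xi z, Ti T i xi ->
     exists g, Gi G i g /\
       (efin (ordz (xi z)) ->
        ele (eadd (eadd (ordE xi) (ordE xi)) (ordz z))
            (ordz (fsub (fsub g Id) xi z)))) /\
  (forall g z, Gi G i g ->
     exists xi, Ti T i xi /\
       (efin (ordz (fsub g Id z)) ->
        ele (eadd (eadd (ordE (fsub g Id)) (ordE (fsub g Id))) (ordz z))
            (ordz (fsub (fsub g Id) xi z)))).

Definition Timg (T : (M -> M) -> Prop) (k : nat) (z : M) : M -> Prop :=
  fun w => exists2 xi, Ti T k xi & w = xi z.
Definition Gorb (G : (M -> M) -> Prop) (k : nat) (z : M) : M -> Prop :=
  fun w => exists2 g, Gi G k g & w = g z.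

Definition filt_closure (X : M -> Prop) : M -> Prop :=
  fun w => forall j, (1 <= j)%N -> exists x, X x /\ exists2 m, Mf j m & w = x + m.

End Filtered.

(* Successive approximation in the filtration topology.  Let w lie in M_(N+k+ord z) and
   suppose g in G^(k) satisfies g z = z + w modulo M_(N+k+ord z+n).  The remainder lies in
   the closure of T^(k+n)(z), so up to a deeper term it is xi z for some xi in T^(k+n), and
   condition (a) yields g' in G^(k+n) with g' z - z = xi z modulo M_(2(k+n)+ord z), which is
   deeper than M_(N+k+ord z+n) because k > N.  Then g o g' improves the approximation by one
   step, since (g o g') z - z = (g - Id)(g' z - z) + (g' z - z) and g - Id raises the order
   by k >= 1.  The converse uses condition (b) in the same way, adding elements of T instead
   of composing elements of G. *)

From mathcomp Require Import all_boot all_algebra.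
From mathcomp Require Import zify.
From Stdlib Require Import Classical ClassicalEpsilon.
Set Implicit Arguments. Unset Strict Implicit. Unset Printing Implicit Defensive.
Import GRing.Theory.
Local Open Scope ring_scope.

Lemma esup_spec (S : nat -> Prop) : (exists j, S j) -> is_esup S (esup S).
Proof.
move=> [j0 Sj0]; apply: epsilon_spec.
have [unbounded|/not_all_ex_not [b Hb]] :=
  classic (forall j, exists2 j', (j <= j')%N & S j'); first by exists None.
have ltb j : S j -> (j < b)%N.
  by move=> Sj; rewrite ltnNge; apply/negP => le_bj; apply: Hb; exists j.
elim: b {Hb} ltb => [|b IHb] ltb; first by have := ltb _ Sj0.
have [Sb|nSb] := classic (S b); first by exists (Some b); split=> // j /ltb.
apply: IHb => j Sj; move: (ltb _ Sj); rewrite ltnS leq_eqVlt => /orP[/eqP eq_jb|//].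
by rewrite eq_jb in Sj.
Qed.

Lemma ele_trans (a b c : enat) : ele a b -> ele b c -> ele a c.
Proof. by case: a b c => [a|] [b|] [c|] //=; apply: leq_trans. Qed.

Lemma ele_eadd (a b c d : enat) : ele a b -> ele c d -> ele (eadd a c) (eadd b d).
Proof. by case: a b c d => [a|] [b|] [c|] [d|] //=; apply: leq_add. Qed.

Section Filtration.

Variables (R : comPzRingType) (M : lmodType R) (Mf : nat -> M -> Prop).
Hypothesis Mf_submod :
  forall j, Mf j 0 /\ (forall a u v, Mf j u -> Mf j v -> Mf j (a *: u + v)).
Hypothesis Mf_top : forall w, Mf 0%N w.
Hypothesis Mf_decr : forall j w, Mf j.+1 w -> Mf j w.

Local Notation id_M := (@Id R M).

Lemma Mf_zero j : Mf j 0.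
Proof. by case: (Mf_submod j). Qed.

Lemma MfD j u v : Mf j u -> Mf j v -> Mf j (u + v).
Proof. by move=> Mu Mv; case: (Mf_submod j) => _ /(_ 1 u v Mu Mv); rewrite scale1r. Qed.

Lemma MfN j u : Mf j u -> Mf j (- u).
Proof.
by move=> Mu; case: (Mf_submod j) => _ /(_ (-1) u 0 Mu (Mf_zero j)); rewrite scaleN1r addr0.
Qed.

Lemma MfB j u v : Mf j u -> Mf j v -> Mf j (u - v).
Proof. by move=> Mu /MfN; apply: MfD. Qed.

Lemma Mf_le m n w : (m <= n)%N -> Mf n w -> Mf m w.
Proof.
move=> /subnKC <-; elim: (n - m)%N => [|i IHi]; first by rewrite addn0.
by rewrite addnS => /Mf_decr.
Qed.

Lemma Mf_ordz n x : ele (Some n) (ordz Mf x) -> Mf n x.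
Proof.
have := @esup_spec (fun j => Mf j x) (ex_intro _ 0%N (Mf_top x)).
rewrite /ordz; case: (esup _) => [m [Mm _]|unbounded] /= le_nm.
  exact: Mf_le le_nm Mm.
by have [j le_nj Mj] := unbounded n; apply: Mf_le le_nj Mj.
Qed.

Lemma Mf_ordz_inf n x : ~ efin (ordz Mf x) -> Mf n x.
Proof. by move=> inf_x; apply: Mf_ordz; case: (ordz Mf x) inf_x => // m []. Qed.

Lemma ordE_ge k phi : End_i Mf k phi -> ele (Some k) (ordE Mf phi).
Proof.
move=> Ephi; have := @esup_spec (fun j => End_i Mf j phi) (ex_intro _ k Ephi).
by rewrite /ordE; case: (esup _) => [m [_ max_m]|] //=; apply: max_m.
Qed.

Lemma Mf_Lie_bound k d phi y z :
  End_i Mf k phi -> ele (Some d) (ordz Mf z) ->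
  ele (eadd (eadd (ordE Mf phi) (ordE Mf phi)) (ordz Mf z)) (ordz Mf y) ->
  Mf (k + k + d) y.
Proof.
move=> /ordE_ge le_k le_d le_y; apply: Mf_ordz; apply: ele_trans le_y.
exact: (ele_eadd (ele_eadd le_k le_k) le_d).
Qed.

Lemma linear_fsub (f g : M -> M) : linear f -> linear g -> linear (fsub f g).
Proof. by move=> Lf Lg a u v; rewrite /fsub Lf Lg scalerBr opprD addrACA. Qed.

Lemma linear_comp (f g : M -> M) : linear f -> linear g -> linear (f \o g).
Proof. by move=> Lf Lg a u v /=; rewrite Lg Lf. Qed.

Lemma End_i_le k k' phi : (k <= k')%N -> End_i Mf k' phi -> End_i Mf k phi.
Proof.
by move=> le_kk' [Lphi Ephi]; split=> // j w /Ephi; apply: Mf_le; rewrite leq_add2l.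
Qed.

Lemma End_i_fsubId_comp k (g g' : M -> M) :
  linear g -> linear g' -> (forall j w, Mf j w -> Mf j (g' w)) ->
  End_i Mf k (fsub g id_M) -> End_i Mf k (fsub g' id_M) ->
  End_i Mf k (fsub (g \o g') id_M).
Proof.
move=> Lg Lg' Pg' [_ Eg] [_ Eg']; split; first by apply: linear_fsub => //; apply: linear_comp.
move=> j w Mw; have -> : fsub (g \o g') id_M w = fsub g id_M (g' w) + fsub g' id_M w.
  by rewrite /fsub /Id /= addrA subrK.
by apply: MfD; [apply/Eg/Pg' | apply: Eg'].
Qed.

Lemma GL0_inv_sym (g h : M -> M) : GL0_inv Mf g h -> GL0_inv Mf h g.
Proof.
case=> Lg gK hK Pg Ph; split=> // a u v.
by rewrite -{1}(hK u) -{1}(hK v) -Lg gK.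
Qed.

Lemma GL0_inv_comp (g h g' h' : M -> M) :
  GL0_inv Mf g h -> GL0_inv Mf g' h' -> GL0_inv Mf (g \o g') (h' \o h).
Proof.
case=> Lg gK hK Pg Ph [Lg' gK' hK' Pg' Ph']; split.
- exact: linear_comp.
- by move=> x /=; rewrite gK gK'.
- by move=> x /=; rewrite hK' hK.
- by move=> j w /Pg' /Pg.
- by move=> j w /Ph /Ph'.
Qed.

Lemma GLi_comp k (g g' : M -> M) : GLi Mf k g -> GLi Mf k g' -> GLi Mf k (g \o g').
Proof.
move=> [h [gh [Eg Eh]]] [h' [gh' [Eg' Eh']]].
exists (h' \o h); split; first exact: GL0_inv_comp.
have [Lg _ _ _ Ph] := gh; have [Lg' _ _ Pg' _] := gh'.
have [Lh _ _ _ _] := GL0_inv_sym gh; have [Lh' _ _ _ _] := GL0_inv_sym gh'.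
by split; apply: End_i_fsubId_comp.
Qed.

Lemma GLi_le k k' (g : M -> M) : (k <= k')%N -> GLi Mf k' g -> GLi Mf k g.
Proof.
by move=> le_kk' [h [gh [Eg Eh]]]; exists h; split=> //; split; apply: End_i_le le_kk' _.
Qed.

Lemma GLi_Id k : GLi Mf k id_M.
Proof.
exists id_M; split; first by split.
split; split=> [a u v|j w _]; rewrite /fsub /Id !subrr ?scaler0 ?addr0 //; exact: Mf_zero.
Qed.

Variables G T : (M -> M) -> Prop.
Hypothesis HG : is_subgroup_GL1 Mf G.
Hypothesis HT : is_submodule_End1 Mf T.

Lemma Gi_Id k : Gi Mf G k id_M.
Proof. by split; [case: HG | apply: GLi_Id]. Qed.

Lemma Gi_comp k (g g' : M -> M) : Gi Mf G k g -> Gi Mf G k g' -> Gi Mf G k (g \o g').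
Proof.
by case: HG => _ _ G_comp _ [Gg GLg] [Gg' GLg']; split; [apply: G_comp | apply: GLi_comp].
Qed.

Lemma Gi_le k k' (g : M -> M) : (k <= k')%N -> Gi Mf G k' g -> Gi Mf G k g.
Proof. by move=> le_kk' [Gg GLg]; split=> //; apply: GLi_le GLg. Qed.

Lemma Ti_zero k : Ti Mf T k (fun _ => 0).
Proof.
case: HT => _ T0 _; split=> //; split=> [a u v|j w _]; last exact: Mf_zero.
by rewrite scaler0 addr0.
Qed.

Lemma Ti_lincomb k a (xi eta : M -> M) :
  Ti Mf T k xi -> Ti Mf T k eta -> Ti Mf T k (fun w => a *: xi w + eta w).
Proof.
case: HT => _ _ T_lin [Txi [Lxi Exi]] [Teta [Leta Eeta]]; split; first exact: T_lin.
split=> [b u v|j w Mw].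
  by rewrite Lxi Leta !scalerDr !scalerA [a * b]mulrC addrACA.
by case: (Mf_submod (j + k)) => _; apply; [apply: Exi | apply: Eeta].
Qed.

Lemma Ti_le k k' (xi : M -> M) : (k <= k')%N -> Ti Mf T k' xi -> Ti Mf T k xi.
Proof. by move=> le_kk' [Txi Exi]; split=> //; apply: End_i_le Exi. Qed.

Lemma filt_closure_approx (X : M -> Prop) w :
  (forall n, exists2 x, X x & Mf n (x - w)) -> filt_closure Mf X w.
Proof.
move=> approx j _; have [x Xx Mxw] := approx j.
exists x; split=> //; exists (w - x); last by rewrite addrC subrK.
by rewrite -opprB; apply: MfN.
Qed.

Hypothesis HLie : pointwise_weak_Lie Mf T G.
Variables (z : M) (d : nat).
Hypothesis le_d_ordz : ele (Some d) (ordz Mf z).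

Lemma weak_Lie_G_of_T k xi : (1 <= k)%N -> Ti Mf T k xi ->
  exists2 g, Gi Mf G k g & Mf (k + k + d) (g z - z - xi z).
Proof.
move=> k_gt0 Txi; have [g [Gg Hg]] := (HLie k_gt0).1 xi z Txi.
have [fin_xiz|inf_xiz] := classic (efin (ordz Mf (xi z))).
  by exists g => //; apply: Mf_Lie_bound Txi.2 le_d_ordz (Hg fin_xiz).
exists id_M; first exact: Gi_Id.
by rewrite /Id subrr sub0r; apply/MfN/Mf_ordz_inf.
Qed.

Lemma weak_Lie_T_of_G k g : (1 <= k)%N -> Gi Mf G k g ->
  exists2 xi, Ti Mf T k xi & Mf (k + k + d) (g z - z - xi z).
Proof.
move=> k_gt0 Gg; have [xi [Txi Hxi]] := (HLie k_gt0).2 g z Gg.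
have [fin_gz|inf_gz] := classic (efin (ordz Mf (fsub g id_M z))).
  exists xi => //; apply: Mf_Lie_bound le_d_ordz (Hxi fin_gz).
  by case: Gg => _ [h [_ []]].
by exists (fun _ => 0); [apply: Ti_zero | rewrite subr0; apply: Mf_ordz_inf].
Qed.

Variable N : nat.

Section TangentToOrbit.

Hypothesis Tz_dense : forall k, (1 <= k)%N ->
  forall w, Mf (N + k + d) w -> filt_closure Mf (Timg Mf T k z) w.

Lemma orbit_approx_step k n w g : (N < k)%N ->
  Gi Mf G k g -> Mf (N + k + d + n) (g z - z - w) ->
  exists2 g', Gi Mf G k g' & Mf (N + k + d + n.+1) (g' z - z - w).
Proof.
move=> lt_Nk Gg Mgw; pose e := w - (g z - z).
have Me : Mf (N + (k + n) + d) e.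
  by rewrite /e -opprB; apply: MfN; apply: Mf_le Mgw; lia.
have kn_gt0 : (1 <= k + n)%N by lia.
have [_ [[xi Txi ->] [m Mm e_def]]] := (Tz_dense kn_gt0 Me) (N + k + d + n).+1 isT.
have [g' Gg' Mr] := weak_Lie_G_of_T kn_gt0 Txi.
exists (g \o g'); first by apply: Gi_comp Gg (Gi_le (leq_addr n k) Gg').
pose u := g' z - z.
have Mu : Mf (N + (k + n) + d) u.
  rewrite -[u](subrK (xi z)); apply: MfD; first by apply: Mf_le Mr; lia.
  by rewrite -[xi z](addrK m) -e_def; apply: MfB => //; apply: Mf_le Mm; lia.
have [_ [h [[Lg _ _ _ _] [[_ Eg] _]]]] := Gg.
have -> : g (g' z) - z - w = fsub g id_M u + (g' z - z - xi z) - m.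
  have gD x y : g (x + y) = g x + g y by have := Lg 1 x y; rewrite !scale1r.
  have -> : g (g' z) = g u + g z by rewrite -gD subrK.
  have -> : w = (g z - z) + (xi z + m) by rewrite -e_def addrC subrK.
  by rewrite /fsub /Id -[g u + g z - z]addrA addrKA subrKA opprD addrA.
apply: MfB; last by apply: Mf_le Mm; lia.
by apply: MfD; [apply: Mf_le (Eg _ _ Mu) | apply: Mf_le Mr]; lia.
Qed.

Lemma orbit_closure_of_tangent_closure k w : (N < k)%N ->
  Mf (N + k + d) w -> filt_closure Mf (Gorb Mf G k z) (z + w).
Proof.
move=> lt_Nk Mw.
have approx n : exists2 g, Gi Mf G k g & Mf (N + k + d + n) (g z - z - w).
  elim: n => [|n [g Gg Mgw]]; last exact: orbit_approx_step lt_Nk Gg Mgw.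
  by exists id_M; [apply: Gi_Id | rewrite addn0 /Id subrr sub0r; apply: MfN].
apply: filt_closure_approx => n; have [g Gg Mgw] := approx n.
by exists (g z); [exists g | rewrite opprD addrA; apply: Mf_le Mgw; lia].
Qed.

End TangentToOrbit.

Section OrbitToTangent.

Hypothesis Gz_dense : forall k, (1 <= k)%N ->
  forall w, Mf (N + k + d) w -> filt_closure Mf (Gorb Mf G k z) (z + w).

Lemma tangent_approx_step k n w xi : (N < k)%N ->
  Ti Mf T k xi -> Mf (N + k + d + n) (xi z - w) ->
  exists2 xi', Ti Mf T k xi' & Mf (N + k + d + n.+1) (xi' z - w).
Proof.
move=> lt_Nk Txi Mxiw; pose e := w - xi z.
have Me : Mf (N + (k + n) + d) e.
  by rewrite /e -opprB; apply: MfN; apply: Mf_le Mxiw; lia.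
have kn_gt0 : (1 <= k + n)%N by lia.
have [_ [[g Gg ->] [m Mm e_def]]] := (Gz_dense kn_gt0 Me) (N + k + d + n).+1 isT.
have [xi' Txi' Mr] := weak_Lie_T_of_G kn_gt0 Gg.
exists (fun u => 1 *: xi u + xi' u).
  exact: Ti_lincomb Txi (Ti_le (leq_addr n k) Txi').
have -> : 1 *: xi z + xi' z - w = - (g z - z - xi' z) - m.
  have e_eq : e = g z - z + m by rewrite addrAC -e_def addrC addKr.
  have -> : w = xi z + e by rewrite /e addrC subrK.
  by rewrite scale1r e_eq [xi z + xi' z]addrC addrKA opprB opprD addrA.
by apply: MfB; [apply/MfN; apply: Mf_le Mr | apply: Mf_le Mm]; lia.
Qed.

Lemma tangent_closure_of_orbit_closure k w : (N < k)%N ->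
  Mf (N + k + d) w -> filt_closure Mf (Timg Mf T k z) w.
Proof.
move=> lt_Nk Mw.
have approx n : exists2 xi, Ti Mf T k xi & Mf (N + k + d + n) (xi z - w).
  elim: n => [|n [xi Txi Mxiw]]; last exact: tangent_approx_step lt_Nk Txi Mxiw.
  by exists (fun _ => 0); [apply: Ti_zero | rewrite addn0 sub0r; apply: MfN].
apply: filt_closure_approx => n; have [xi Txi Mxiw] := approx n.
by exists (xi z); [exists xi | apply: Mf_le Mxiw; lia].
Qed.

End OrbitToTangent.

End Filtration.

Theorem theorem4p3 (R : comPzRingType) (M : lmodType R) (Mf : nat -> M -> Prop)
  (Mf_sub : forall j, Mf j 0 /\ (forall a u v, Mf j u -> Mf j v -> Mf j (a *: u + v)))
  (Mf0 : forall w, Mf 0%N w)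
  (Mf_decr : forall j w, Mf j.+1 w -> Mf j w)
  (G T : (M -> M) -> Prop)
  (HG : is_subgroup_GL1 Mf G) (HT : is_submodule_End1 Mf T)
  (HLie : pointwise_weak_Lie Mf T G)
  (z : M) (N : nat) :
  ((forall k, (1 <= k)%N ->
      forall w, Mfe Mf (eadd (Some (N + k)%N) (ordz Mf z)) w ->
                filt_closure Mf (Timg Mf T k z) w) ->
   forall k, (N < k)%N ->
      forall w, Mfe Mf (eadd (Some (N + k)%N) (ordz Mf z)) w ->
                filt_closure Mf (Gorb Mf G k z) (z + w)) /\
  ((forall k, (1 <= k)%N ->
      forall w, Mfe Mf (eadd (Some (N + k)%N) (ordz Mf z)) w ->
                filt_closure Mf (Gorb Mf G k z) (z + w)) ->
   forall k, (N < k)%N ->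
      forall w, Mfe Mf (eadd (Some (N + k)%N) (ordz Mf z)) w ->
                filt_closure Mf (Timg Mf T k z) w).
Proof.
case ordz_z: (ordz Mf z) => [d|] /=.
  have le_d : ele (Some d) (ordz Mf z) by rewrite ordz_z /=.
  split=> dense k lt_Nk w Mw.
  - exact (orbit_closure_of_tangent_closure Mf_sub Mf0 Mf_decr HG HLie le_d dense lt_Nk Mw).
  - exact (tangent_closure_of_orbit_closure Mf_sub Mf0 Mf_decr HT HLie le_d dense lt_Nk Mw).
split=> _ k _ w Mw; apply: (filt_closure_approx Mf_sub) => n.
- exists z; first by exists (@Id R M); first exact: Gi_Id.
  by rewrite opprD addrA subrr sub0r; apply: (MfN Mf_sub).
- exists 0; first by exists (fun _ => 0); first exact: Ti_zero.
  by rewrite sub0r; apply: (MfN Mf_sub).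
Qed.
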